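(* Let $G$ be a graph of order $n\ge 3$, let $\mathbf{x}=(x_1,\ldots,x_n)$ be a nonnegative unit eigenvector of $Q(G)$ for the eigenvalue $q(G)$, and let $u$ be a vertex with $x_u=\min\{x_1,\ldots,x_n\}$. Then \[ \frac{q(G-u)}{n-2}\ge \frac{q(G)}{n-1}\left(1+\frac{1-nx_u^2}{(n-2)(1-x_u^2)}\right)-\frac{1-nx_u^2}{(n-2)(1-x_u^2)}. \]
   Context: All graphs are finite and simple. $Q(G)=D(G)+A(G)$ is the signless Laplacian ($D(G)$ the diagonal degree matrix, $A(G)$ the adjacency matrix) and $q(G)$ its largest eigenvalue. ''Unit'' means Euclidean norm $1$; the coordinate $x_v$ corresponds to vertex $v$. $G-u$ denotes the graph obtained by deleting $u$ and all incident edges. *)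

From HB Require Import structures.
From mathcomp Require Import all_boot all_order all_algebra.
From mathcomp Require Export reals.
Set Implicit Arguments. Unset Strict Implicit. Unset Printing Implicit Defensive.
Import Order.TTheory GRing.Theory Num.Theory.
Local Open Scope ring_scope.

Definition simple_graph (k : nat) (e : rel 'I_k) : Prop :=
  (forall i j, e i j = e j i) /\ (forall i, e i i = false).

Definition deg (k : nat) (e : rel 'I_k) (i : 'I_k) : nat := #|[set j | e i j]|.

Definition adjmx (R : nzRingType) (k : nat) (e : rel 'I_k) : 'M[R]_k :=
  \matrix_(i, j) (if e i j then 1 else 0).
Definition degmx (R : nzRingType) (k : nat) (e : rel 'I_k) : 'M[R]_k :=
  \matrix_(i, j) (if i == j then (deg e i)%:R else 0).
Definition signless_laplacian (R : nzRingType) (k : nat) (e : rel 'I_k) : 'M[R]_k :=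
  degmx R e + adjmx R e.

Definition del_vertex (k : nat) (e : rel 'I_k) (u : 'I_k) : rel 'I_k.-1 :=
  fun i j => e (lift u i) (lift u j).

Definition is_largest_eigenvalue (R : realType) (k : nat) (A : 'M[R]_k) (l : R) : Prop :=
  eigenvalue A l /\ (forall mu, eigenvalue A mu -> mu <= l).

From HB Require Import structures.
From mathcomp Require Import all_boot all_order all_algebra.
From mathcomp Require Import reals.
From mathcomp Require Import complex lra ring.
Import Order.TTheory GRing.Theory Num.Theory.
Local Open Scope ring_scope.
Set Implicit Arguments. Unset Strict Implicit. Unset Printing Implicit Defensive.

(* Restricting the Perron vector x of Q(G) to V(G) - u gives a test vector y
   for Q(G - u).  As Q(G - u) is the restriction of Q(G) minus the indicator
   of the neighbours of u on its diagonal, the eigen-equations of x at the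
   vertices v <> u and at u give
     y^T Q(G - u) y = q(G) (1 - 2 x_u^2) + sum_(v ~ u) (x_u^2 - x_v^2),
   and minimality of x_u bounds that last sum below by
   sum_v (x_u^2 - x_v^2) = n x_u^2 - 1.  The Rayleigh bound
   y^T Q(G - u) y <= q(G - u) (1 - x_u^2) then rearranges to the claim. *)

Section Rayleigh.
Local Open Scope sesquilinear_scope.
Variable R : realType.
Local Notation toC := (real_complex R).

Lemma conj_real_complex (r : R) : (toC r)^* = toC r.
Proof. by apply/conj_Creal/complex_realP; exists r. Qed.

(* Diagonalise A = P^t* diag(d) P unitarily and take the largest (real)
   entry of d. *)
Lemma hermitian_quad_le_eigenvalue m (A : 'M[R[i]]_m.+1) (z : 'rV_m.+1) :
  A \is hermsymmx ->
  exists2 r : R, eigenvalue A (toC r) &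
    (z *m A *m z^t*) 0 0 <= toC r * (z *m z^t*) 0 0.
Proof.
move=> hermA; set P := spectralmx A; set d := spectral_diag A.
have P_unitary : P \is unitarymx := spectral_unitarymx A.
have P_unit := unitarymx_unit P_unitary.
have AE : A = P^t* *m diag_mx d *m P.
  by rewrite -invmx_unitary //; apply/orthomx_spectralP/hermitian_normalmx.
have PPt : P *m P^t* = 1%:M by apply/unitarymxP.
have PtP : P^t* *m P = 1%:M by rewrite -invmx_unitary // mulVmx.
have dE i : d 0 i = toC (complex.Re (d 0 i)).
  by rewrite RRe_real //; apply: (mxOverP (hermitian_spectral_diag_real hermA)).
pose k := [arg max_(k > ord0) complex.Re (d 0 k)]%O.
have k_max i : complex.Re (d 0 i) <= complex.Re (d 0 k).
  by rewrite /k; case: arg_maxP => // j _; apply.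
exists (complex.Re (d 0 k)).
  apply/eigenvalueP; exists (row k P).
    rewrite -row_mul AE !mulmxA PPt mul1mx mul_diag_mx -dE.
    by apply/rowP => j; rewrite !mxE.
  apply/eqP => row0.
  have := congr1 (fun M : 'M_(1, m.+1) => M 0 k) (row_mul k P (P^t*)).
  by rewrite row0 mul0mx PPt !mxE eqxx => /eqP; rewrite oner_eq0.
pose w := z *m P^t*.
have wE : w^t* = P *m z^t* by rewrite /w trmx_mul map_mxM trmxCK.
have quadE : z *m A *m z^t* = w *m diag_mx d *m w^t*.
  by rewrite wE AE /w !mulmxA.
have normE : z *m z^t* = w *m w^t*.
  by rewrite wE /w -(mulmxA z (P^t*)) (mulmxA (P^t*)) PtP mul1mx.
rewrite quadE normE mul_mx_diag !mxE mulr_sumr.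
apply: ler_sum => i _; rewrite !mxE -mulrA mulrCA mulrC [X in _ <= X]mulrC.
by apply: ler_wpM2l; [exact: mul_conjC_ge0 | rewrite [d 0 i]dE lecR].
Qed.

Lemma symmetric_quad_le_largest_eigenvalue m (B : 'M[R]_m) (v : 'cV[R]_m) l :
  B^T = B -> is_largest_eigenvalue B l ->
  (v^T *m B *m v) 0 0 <= l * (v^T *m v) 0 0.
Proof.
case: m B v => [|m] B v BT [_ l_max]; first by rewrite !mxE !big_ord0 mulr0.
have hermB : map_mx toC B \is hermsymmx.
  apply/is_hermitianmxP; rewrite expr0 scale1r; apply/matrixP => i j.
  by rewrite !mxE conj_real_complex -{1}BT mxE.
have vC : (map_mx toC v^T)^t* = map_mx toC v.
  by apply/matrixP => i j; rewrite !mxE conj_real_complex.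
have [r r_eig] := hermitian_quad_le_eigenvalue (map_mx toC v^T) hermB.
rewrite vC -!map_mxM !mxE -rmorphM lecR => /le_trans; apply.
have r_eigB : eigenvalue B r.
  by move: r_eig; rewrite !eigenvalue_root_char -map_char_poly fmorph_root.
apply: ler_wpM2r; last exact: l_max.
by apply: sumr_ge0 => i _; rewrite !mxE -expr2 sqr_ge0.
Qed.

End Rayleigh.

Lemma quad_formE (R : comNzRingType) m (B : 'M[R]_m) (v : 'cV[R]_m) :
  (v^T *m B *m v) 0 0 = \sum_i v i 0 * \sum_j B i j * v j 0.
Proof.
rewrite !mxE; under eq_bigr do rewrite !mxE mulr_suml.
rewrite exchange_big; apply: eq_bigr => i _; rewrite mulr_sumr.
by apply: eq_bigr => j _; rewrite !mxE mulrA mulrC mulrA.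
Qed.

Lemma norm2_colE (R : comNzRingType) m (v : 'cV[R]_m) :
  (v^T *m v) 0 0 = \sum_i v i 0 ^+ 2.
Proof. by rewrite !mxE; apply: eq_bigr => i _; rewrite !mxE expr2. Qed.

Lemma sum_nonpos_le_sum_filter (R : numDomainType) (I : finType) (P : pred I)
    (F : I -> R) :
  (forall i, ~~ P i -> F i <= 0) -> \sum_i F i <= \sum_(i | P i) F i.
Proof.
move=> F_le0; rewrite (bigID P) /= gerDl.
by apply: sumr_le0 => i; apply: F_le0.
Qed.

Lemma deg_sum (R : nzSemiRingType) n (e : rel 'I_n) i :
  (deg e i)%:R = \sum_(j | e i j) 1 :> R.
Proof. by rewrite /deg -sum1_card natr_sum; apply: eq_bigl => j; rewrite inE. Qed.

Section SignlessLaplacian.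
Variables (R : nzRingType) (n : nat) (e : rel 'I_n).
Local Notation Q := (signless_laplacian R e).

Lemma signless_laplacian_tr : (forall i j, e i j = e j i) -> Q^T = Q.
Proof.
move=> e_sym; apply/matrixP => i j; rewrite !mxE e_sym.
by case: eqVneq => [->|]; rewrite ?eqxx // eq_sym => /negbTE ->.
Qed.

Lemma signless_laplacian_del_vertex u i j :
  signless_laplacian R (del_vertex e u) i j =
  Q (lift u i) (lift u j) - (if (i == j) && e (lift u i) u then 1 else 0).
Proof.
rewrite !mxE (inj_eq lift_inj) /del_vertex.
case: eqVneq => [<-|_] /=; last by rewrite subr0.
rewrite !deg_sum [in RHS]big_mkcond (bigD1_ord u) //= -big_mkcond /=.
by case: (e _ u); rewrite ?add0r ?subr0 // addrAC [1 + _]addrC addrK.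
Qed.

End SignlessLaplacian.

Definition del_coord (R : Type) n (u : 'I_n) (x : 'cV[R]_n) : 'cV[R]_n.-1 :=
  \col_i x (lift u i) 0.

Lemma del_coord_norm2 (R : comNzRingType) n (u : 'I_n) (x : 'cV[R]_n) :
  ((del_coord u x)^T *m del_coord u x) 0 0 = \sum_i x (lift u i) 0 ^+ 2.
Proof. by rewrite norm2_colE; apply: eq_bigr => i _; rewrite mxE. Qed.

Section DeleteVertex.
Variables (R : comNzRingType) (n : nat) (e : rel 'I_n) (u : 'I_n).
Variables (q : R) (x : 'cV[R]_n).
Hypothesis e_simple : simple_graph e.
Hypothesis x_eigen : signless_laplacian R e *m x = q *: x.
Local Notation Q := (signless_laplacian R e).
Local Notation a := (x u 0).

Lemma sum_neighbour_lift (G : 'I_n -> R) :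
  \sum_(I | e u I) G I = \sum_i (if e u (lift u i) then G (lift u i) else 0).
Proof. by rewrite big_mkcond (bigD1_ord u) //= (proj2 e_simple) add0r. Qed.

Lemma eigen_row I : \sum_J Q I J * x J 0 = q * x I 0.
Proof. by have := congr1 (fun M : 'cV_n => M I 0) x_eigen; rewrite !mxE. Qed.

Lemma neighbour_sum : \sum_(I | e u I) x I 0 = (q - (deg e u)%:R) * a.
Proof.
have := eigen_row u; rewrite (bigD1 u) //= !mxE eqxx (proj2 e_simple) addr0.
rewrite mulrBl => <-; rewrite addrAC subrr add0r.
rewrite big_mkcond [RHS]big_mkcond /=; apply: eq_bigr => J _.
case: eqVneq => [->|uJ]; first by rewrite (proj2 e_simple).
by rewrite !mxE eq_sym (negbTE uJ) add0r; case: (e u J); rewrite ?mul1r ?mul0r.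
Qed.

Lemma del_vertex_row i :
  \sum_j signless_laplacian R (del_vertex e u) i j * x (lift u j) 0 =
  q * x (lift u i) 0 - (if e u (lift u i) then a + x (lift u i) 0 else 0).
Proof.
under eq_bigr do rewrite signless_laplacian_del_vertex mulrBl.
rewrite sumrB [X in _ - X](bigD1 i) //= eqxx [X in _ - (_ + X)]big1; last first.
  by move=> j /negbTE; rewrite eq_sym => ->; rewrite mul0r.
have := eigen_row (lift u i); rewrite (bigD1_ord u) //= !mxE.
rewrite eq_sym (negbTE (neq_lift u i)) add0r (proj1 e_simple) => <-.
by case: (e u _); ring.
Qed.

Lemma quad_del_vertex :
  let y := del_coord u x in
  (y^T *m signless_laplacian R (del_vertex e u) *m y) 0 0 =
  q * (\sum_i x (lift u i) 0 ^+ 2 - a ^+ 2)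
  + \sum_(I | e u I) (a ^+ 2 - x I 0 ^+ 2).
Proof.
rewrite /= quad_formE.
have -> : \sum_i del_coord u x i 0 *
      \sum_j signless_laplacian R (del_vertex e u) i j * del_coord u x j 0 =
    q * \sum_i x (lift u i) 0 ^+ 2 - \sum_(I | e u I) (a * x I 0 + x I 0 ^+ 2).
  rewrite sum_neighbour_lift mulr_sumr -sumrB; apply: eq_bigr => i _.
  under eq_bigr do rewrite [del_coord u x _ 0]mxE.
  by rewrite del_vertex_row mxE; case: (e u _); ring.
have sum_a2 : \sum_(I | e u I) a ^+ 2 = (deg e u)%:R * a ^+ 2.
  by rewrite deg_sum mulr_suml; under [RHS]eq_bigr do rewrite mul1r.
by rewrite big_split sumrB -mulr_sumr neighbour_sum sum_a2 /=; ring.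
Qed.

End DeleteVertex.

Section MinimalEntry.
Variables (R : realDomainType) (n : nat) (x : 'I_n -> R) (u : 'I_n).
Hypotheses (x_u_ge0 : 0 <= x u) (x_min : forall i, x u <= x i).

Lemma min_sq_le i : x u ^+ 2 <= x i ^+ 2.
Proof. by rewrite ler_sqr ?x_min // nnegrE (le_trans x_u_ge0). Qed.

Let card_mul_min_sq : n%:R * x u ^+ 2 = \sum_(i < n) x u ^+ 2.
Proof. by rewrite sumr_const card_ord mulr_natl. Qed.

Lemma card_mul_min_sq_le_sum : n%:R * x u ^+ 2 <= \sum_i x i ^+ 2.
Proof. by rewrite card_mul_min_sq; apply: ler_sum => i _; apply: min_sq_le. Qed.

Lemma card_mul_min_sq_sub_sum_le (P : pred 'I_n) :
  n%:R * x u ^+ 2 - \sum_i x i ^+ 2 <= \sum_(i | P i) (x u ^+ 2 - x i ^+ 2).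
Proof.
rewrite card_mul_min_sq -sumrB; apply: sum_nonpos_le_sum_filter => i _.
by rewrite subr_le0 min_sq_le.
Qed.

End MinimalEntry.

Lemma ratio_bound_of_cleared_bound (R : realFieldType) (k q q' b : R) :
  3 <= k -> k * b <= 1 ->
  q * (1 - 2 * b) - (1 - k * b) <= q' * (1 - b) ->
  let t := (1 - k * b) / ((k - 2) * (1 - b)) in
  q / (k - 1) * (1 + t) - t <= q' / (k - 2).
Proof.
move=> k_ge3 kb_le1 cleared; cbv zeta; set t := (1 - k * b) / _.
have b_lt1 : 0 < 1 - b by nra.
have k2 : k - 2 != 0 by rewrite subr_eq0; apply/eqP; lra.
have k1 : k - 1 != 0 by rewrite subr_eq0; apply/eqP; lra.
have b1 : 1 - b != 0 by rewrite gt_eqF.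
have -> : q' / (k - 2) = q' * (1 - b) / ((k - 2) * (1 - b)).
  by field; rewrite k2 b1.
have -> : q / (k - 1) * (1 + t) - t =
    (q * (1 - 2 * b) - (1 - k * b)) / ((k - 2) * (1 - b)).
  by rewrite /t; field; rewrite k2 k1 b1.
by apply: ler_wpM2r => //; rewrite invr_ge0; apply: mulr_ge0; lra.
Qed.

Theorem lemma3p2 (R : realType) (n : nat) (e : rel 'I_n) (u : 'I_n)
    (q q' : R) (x : 'cV[R]_n) :
  (3 <= n)%N ->
  simple_graph e ->
  is_largest_eigenvalue (signless_laplacian R e) q ->
  is_largest_eigenvalue (signless_laplacian R (del_vertex e u)) q' ->
  (forall i, 0 <= x i 0) ->
  \sum_i (x i 0) ^+ 2 = 1 ->
  signless_laplacian R e *m x = q *: x ->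
  (forall i, x u 0 <= x i 0) ->
  let t := (1 - n%:R * (x u 0) ^+ 2) / ((n%:R - 2) * (1 - (x u 0) ^+ 2)) in
  q' / (n%:R - 2) >= q / (n%:R - 1) * (1 + t) - t.
Proof.
move=> n_ge3 e_simple _ q'_largest x_ge0 x_unit x_eigen x_min.
have Q'_sym := signless_laplacian_tr R (e := del_vertex e u)
  (fun i j => proj1 e_simple (lift u i) (lift u j)).
have rayleigh :=
  symmetric_quad_le_largest_eigenvalue (del_coord u x) Q'_sym q'_largest.
have x_rest : \sum_i x (lift u i) 0 ^+ 2 = 1 - x u 0 ^+ 2.
  by rewrite -x_unit (bigD1_ord u) //= addrC addrK.
rewrite (quad_del_vertex u e_simple x_eigen) del_coord_norm2 x_rest in rayleigh.
have /= deficit :=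
  card_mul_min_sq_sub_sum_le (x := fun i => x i 0) (x_ge0 u) x_min (e u).
have /= card_le :=
  card_mul_min_sq_le_sum (x := fun i => x i 0) (x_ge0 u) x_min.
rewrite x_unit in deficit card_le.
apply: (ratio_bound_of_cleared_bound _ card_le); first by rewrite (ler_nat R 3 n).
lra.
Qed.
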